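(* For every $S\subseteq\mathbb{Z}^2$ and real $\alpha$, $\Theta(S,\alpha)=\vartheta(S,\alpha,0)$.
   Context: Graph $\mathbf{G}$ on $\mathbb{Z}^2$: each $p$ is adjacent to $p\pm(1,0)$, $p\pm(0,1)$, $p+(-1,1)$, $p+(1,-1)$; connectedness and paths refer to $\mathbf{G}$ (paths ''in $S$'' use only vertices of $S$). Triangles: for reals $a,b,c$, $L(a,b,c)=\{(x,y): -x\le a,\ -y\le b,\ x+y\le c\}$, $\mathrm{span}(L(a,b,c))=a+b+c$, $D(L(a,b,c),d)=L(a-d,b-d,c-d)$. For $E\subseteq\mathbb{Z}^2$, $\mathrm{span}(E,d)$ is the minimum of $\sum_{I\in\mathcal{I}}\mathrm{span}(I)$ over finite sets $\mathcal{I}$ of triangles with $E\subseteq\bigcup_{I\in\mathcal{I}}D(I,d)$, and $\mathrm{Span}(E)=\mathrm{span}(E,2)$. A triple $(C,A_1,A_2)$ of pairwise disjoint subsets of $S$ is a cut of $S$ with parameters $|C|,m$ if every path in $S$ from $A_1$ to $A_2$ passes through an element of $C$, and $m=\min_{j=1,2}\mathrm{Span}(A_j\cup C)$. The cut is connected if both $A_1\cup C$ and $A_2\cup C$ are connected. $\Theta(S,\alpha)$ is the smallest $k$ such that $S$ has a cut with parameters $k,m$ with $m>\alpha k$ ($\infty$ if none). $\vartheta(S,\alpha,\beta)$ is the smallest $k$ such that $S$ has a connected cut with parameters $k,m$ with $m>\alpha k+\beta$ ($\infty$ if none). *)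

From HB Require Import structures.
From mathcomp Require Import all_boot all_order all_algebra.
From mathcomp Require Import all_classical all_reals all_analysis.
Set Implicit Arguments. Unset Strict Implicit. Unset Printing Implicit Defensive.
Import Order.TTheory GRing.Theory Num.Theory.
Local Open Scope classical_set_scope.
Local Open Scope ring_scope.

Definition pt := (int * int)%type.

Definition adj (p q : pt) : bool :=
  let d := (q.1 - p.1, q.2 - p.2) in
  [|| d == ((1:int), (0:int)), d == ((-1:int), (0:int)),
      d == ((0:int), (1:int)), d == ((0:int), (-1:int)),
      d == ((-1:int), (1:int)) | d == ((1:int), (-1:int))].

Definition path_in (T : set pt) (x : pt) (s : seq pt) : Prop :=
  path adj x s /\ (forall z, z \in x :: s -> T z).

Definition connected_set (T : set pt) : Prop :=
  forall x y, T x -> T y -> exists s, path_in T x s /\ last x s = y.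

(* Triangles L(a,b,c) are represented by their parameters t = (a,b,c). *)
Definition tspan (R : realType) (t : R * R * R) : R := t.1.1 + t.1.2 + t.2.

(* p belongs to D(L(a,b,c), d) = L(a-d, b-d, c-d) *)
Definition inD (R : realType) (t : R * R * R) (d : R) (p : pt) : Prop :=
  [/\ - (p.1%:~R : R) <= t.1.1 - d,
      - (p.2%:~R : R) <= t.1.2 - d &
      (p.1%:~R : R) + p.2%:~R <= t.2 - d].

(* span(E,d): infimum (a minimum when finite) over finite sets of (nonempty)
   triangles I with E contained in the union of the D(I,d). *)
Definition span_d (R : realType) (E : set pt) (d : R) : \bar R :=
  ereal_inf [set e | exists I : seq (R * R * R),
    [/\ e = (\sum_(t <- I) tspan t)%:E,
        uniq I,
        (forall t, t \in I -> 0 <= tspan t) &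
        (forall p, E p -> exists2 t, t \in I & inD t d p)]].

Definition Span (R : realType) (E : set pt) : \bar R := span_d E 2.

(* (C, A1, A2) is a cut of S; C is finite, given by a duplicate-free list Cs *)
Definition cut (S : set pt) (Cs : seq pt) (A1 A2 : set pt) : Prop :=
  [/\ uniq Cs,
      (forall z, z \in Cs -> S z) /\ A1 `<=` S /\ A2 `<=` S,
      (forall z, z \in Cs -> ~ A1 z /\ ~ A2 z) /\ A1 `&` A2 = set0 &
      (forall x s, A1 x -> path_in S x s -> A2 (last x s) ->
         exists2 z, z \in x :: s & z \in Cs)].

Definition setC_of (Cs : seq pt) : set pt := [set z | z \in Cs].

Definition cut_m (R : realType) (Cs : seq pt) (A1 A2 : set pt) : \bar R :=
  Order.min (Span R (A1 `|` setC_of Cs)) (Span R (A2 `|` setC_of Cs)).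

Definition connected_cut (Cs : seq pt) (A1 A2 : set pt) : Prop :=
  connected_set (A1 `|` setC_of Cs) /\ connected_set (A2 `|` setC_of Cs).

Definition Theta (R : realType) (S : set pt) (alpha : R) : \bar R :=
  ereal_inf [set e | exists Cs A1 A2,
    [/\ e = ((size Cs)%:R : R)%:E, cut S Cs A1 A2 &
        ((alpha * (size Cs)%:R)%:E < cut_m R Cs A1 A2)%E]].

Definition vartheta (R : realType) (S : set pt) (alpha beta : R) : \bar R :=
  ereal_inf [set e | exists Cs A1 A2,
    [/\ e = ((size Cs)%:R : R)%:E, cut S Cs A1 A2, connected_cut Cs A1 A2 &
        ((alpha * (size Cs)%:R + beta)%:E < cut_m R Cs A1 A2)%E]].

From HB Require Import structures.
From mathcomp Require Import all_boot all_order all_algebra.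
From mathcomp Require Import all_classical all_reals all_analysis.
From mathcomp Require Import lra zify.
Set Implicit Arguments. Unset Strict Implicit. Unset Printing Implicit Defensive.
Import Order.TTheory GRing.Theory Num.Theory.
Local Open Scope classical_set_scope.
Local Open Scope ring_scope.

(* Call K heavy for n when Span K > alpha n. One inequality is trivial, since
   connected cuts are cuts. Conversely, start from a cut (C, A1, A2) with
   A1 ∪ C and A2 ∪ C heavy for |C|, and enlarge A1 ∪ C to the side E1 of the
   cut: C together with everything reachable from A1 in S \ C, a set that no
   edge of S leaves except through C. By subadditivity of Span such a set
   contains a connected piece K1 that is again closed outside C ∩ K1 and heavy
   for |C ∩ K1| (peel off components, by induction on |C|). The complement
   (S \ K1) ∪ (C ∩ K1) contains A2 ∪ C and is closed outside C ∩ K1, so it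
   yields a second such piece K2. Then C' = C ∩ K1 ∩ K2 separates K1 \ C' from
   K2 \ C', a connected cut with |C'| ≤ |C| and m > alpha |C'|. *)

Lemma ler_sum_undup (R : numDomainType) (T : eqType) (s : seq T) (F : T -> R) :
  {in s, forall x, 0 <= F x} -> \sum_(x <- undup s) F x <= \sum_(x <- s) F x.
Proof.
elim: s => [|x s IH] F0 //=; rewrite big_cons.
have {}IH := IH (fun y ys => F0 y (predU1r y x ys)).
have Fx := F0 x (mem_head x s).
by case: ifP => _; [exact: ler_wpDl | rewrite big_cons lerD2l].
Qed.

Lemma ereal_inf_leD (R : realType) (X Y Z : set \bar R) :
  (forall y, Y y -> y \is a fin_num) -> (forall z, Z z -> z \is a fin_num) ->
  (0 <= ereal_inf Y)%E -> (0 <= ereal_inf Z)%E ->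
  (forall y z, Y y -> Z z -> exists2 x, X x & (x <= y + z)%E) ->
  (ereal_inf X <= ereal_inf Y + ereal_inf Z)%E.
Proof.
move=> finY finZ Y0 Z0 XYZ.
case EY: (ereal_inf Y) Y0 => [ry| |] // Y0; last first.
  by rewrite addye ?leey //; apply/negP => /eqP Zoo; rewrite Zoo in Z0.
case EZ: (ereal_inf Z) Z0 => [rz| |] // Z0; last by rewrite addey ?leey.
rewrite -leeBlDl // -EZ; apply/ereal_infP => z Zz.
rewrite leeBlDl // -leeBlDr ?finZ // -EY; apply/ereal_infP => y Yy.
rewrite leeBlDr ?finZ //.
have [x Xx le_x] := XYZ y z Yy Zz.
exact: le_trans (ereal_inf_lbound Xx) le_x.
Qed.

Section SpanTheory.
Variables (R : realType) (d : R).

Lemma span_d_ge0 (E : set pt) : (0 <= span_d E d)%E.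
Proof.
apply/ereal_infP => _ [I [-> _ I0 _]]; rewrite lee_fin big_seq.
by apply: sumr_ge0 => t /I0.
Qed.

Lemma le_span_d (E F : set pt) : E `<=` F -> (span_d E d <= span_d F d)%E.
Proof.
move=> EF; apply: le_ereal_inf_tmp => _ [I [-> uI I0 cover]].
by apply: ereal_inf_lbound; exists I; split => // p /EF /cover.
Qed.

Lemma span_d_set0 : span_d set0 d = 0%E.
Proof.
apply/le_anti; rewrite span_d_ge0 andbT.
by apply: ereal_inf_lbound; exists [::]; rewrite big_nil.
Qed.

(* A triangle I with p in D(I, d) has span at least 3d. *)
Lemma span_d_gt0 (E : set pt) p : 0 < d -> E p -> (0 < span_d E d)%E.
Proof.
move=> d0 Ep; apply: (@lt_le_trans _ _ (3 * d)%:E); first by rewrite lte_fin; lra.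
apply/ereal_infP => _ [I [-> _ I0 /(_ p Ep) [t tI [t1 t2 t3]]]].
rewrite lee_fin (big_rem t tI) /=.
have : 0 <= \sum_(u <- rem t I) tspan u.
  by rewrite big_seq; apply: sumr_ge0 => u /mem_rem /I0.
by rewrite /tspan; lra.
Qed.

Lemma span_dU (A B : set pt) :
  (span_d (A `|` B) d <= span_d A d + span_d B d)%E.
Proof.
apply: ereal_inf_leD; [by move=> _ [I [-> _]].. | exact: span_d_ge0 | exact: span_d_ge0 |].
move=> _ _ [I1 [-> _ I10 cover1]] [I2 [-> _ I20 cover2]].
have I0 t : t \in I1 ++ I2 -> 0 <= tspan t by rewrite mem_cat => /orP[/I10|/I20].
exists (\sum_(t <- undup (I1 ++ I2)) tspan t)%:E.
  exists (undup (I1 ++ I2)); split; rewrite ?undup_uniq //.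
    by move=> t; rewrite mem_undup => /I0.
  move=> p [/cover1|/cover2] [t tI Dtp]; exists t => //;
    by rewrite mem_undup mem_cat tI ?orbT.
by rewrite -EFinD lee_fin -big_cat; apply: ler_sum_undup.
Qed.

End SpanTheory.

Lemma adj_sym : symmetric adj.
Proof.
suff adjS p q : adj p q -> adj q p by move=> p q; apply/idP/idP; apply: adjS.
rewrite /adj /= -[q.1 - p.1]opprB -[q.2 - p.2]opprB.
move: (p.1 - q.1) (p.2 - q.2) => a b.
rewrite !xpair_eqE !eqr_oppLR ?opprK ?oppr0.
by move=> /orP[|/orP[|/orP[|/orP[|/orP[]]]]] ->; rewrite ?orbT.
Qed.

Definition reach (T : set pt) (x y : pt) : Prop :=
  exists s, path_in T x s /\ last x s = y.

Section Reach.
Variable T : set pt.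

Lemma reach_refl x : T x -> reach T x x.
Proof. by move=> Tx; exists [::]; split => //; split => // z /[!inE] /eqP ->. Qed.

Lemma reach_memr x y : reach T x y -> T y.
Proof. by move=> [s [[_ sT] <-]]; apply/sT/mem_last. Qed.

Lemma reach1 x y : T x -> T y -> adj x y -> reach T x y.
Proof.
move=> Tx Ty xy; exists [:: y]; split => //; split; first by rewrite /= xy.
by move=> z /[!inE] /orP[] /eqP ->.
Qed.

Lemma reach_trans x y z : reach T x y -> reach T y z -> reach T x z.
Proof.
move=> [s1 [[p1 s1T] xy]] [s2 [[p2 s2T] yz]]; exists (s1 ++ s2).
split; last by rewrite last_cat xy.
split; first by rewrite cat_path p1 xy.
by move=> v; rewrite -cat_cons mem_cat => /orP[/s1T//|v2]; apply: s2T; rewrite inE v2 orbT.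
Qed.

Lemma reach_sym x y : reach T x y -> reach T y x.
Proof.
move=> [s [[ps sT] <-]]; exists (rev (belast x s)).
split; last by case: s {ps sT} => //= a s; rewrite rev_cons last_rcons.
split; first by rewrite rev_path; under eq_path do rewrite /= adj_sym.
by move=> z; rewrite -rev_rcons -lastI mem_rev => /sT.
Qed.

Lemma path_in_reach x s z : path_in T x s -> z \in x :: s -> reach T x z.
Proof.
move=> xs zs; case/splitPl: zs xs => s1 s2 <- [ps sT]; exists s1; split => //; split.
  by move: ps; rewrite cat_path => /andP[].
by move=> v vs1; apply: sT; rewrite -cat_cons mem_cat vs1.
Qed.

Lemma connected_reach x : connected_set (reach T x).
Proof.
move=> y z xy xz; have [s [[ps sT] yz]] := reach_trans (reach_sym xy) xz.
exists s; split => //; split => // v vs.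
exact: reach_trans xy (path_in_reach (conj ps sT) vs).
Qed.

End Reach.

Definition closed_outside (S : set pt) (C : seq pt) (K : set pt) : Prop :=
  forall y w, K y -> y \notin C -> S w -> adj y w -> K w.

Lemma path_enters (S K : set pt) (C : seq pt) x s :
  closed_outside S C K -> path_in S x s -> ~ K x -> K (last x s) ->
  exists2 z, z \in x :: s & z \in C.
Proof.
move=> clK; elim: s x => [|a s IH] x [ps sS] Kx /=; first by move/Kx.
move: ps => /andP[xa ps].
have [aC _|aC Ks] := boolP (a \in C); first by exists a; rewrite ?inE ?eqxx ?orbT.
have [Ka|Ka] := pselect (K a).
  by case: Kx; apply: clK Ka aC (sS x (mem_head _ _)) _; rewrite adj_sym.
have [|z zs zC] := IH a _ Ka Ks; first by split => // z zs; apply: sS; rewrite inE zs orbT.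
by exists z; rewrite // inE zs orbT.
Qed.

Lemma closed_outside_compl (S K : set pt) (C : seq pt) :
  closed_outside S C K -> closed_outside S C ((S `\` K) `|` setC_of C).
Proof.
move=> clK y w [[Sy Ky] | /= yC] yC' Sw yw; last by rewrite yC in yC'.
have [wC|wC] := boolP (w \in C); [by right | left; split => // Kw].
by apply: Ky; apply: clK Kw wC Sy _; rewrite adj_sym.
Qed.

Definition inside (K : set pt) (C : seq pt) : seq pt := [seq z <- C | `[< K z >]].

Lemma mem_insideP (K : set pt) (C : seq pt) z :
  reflect (z \in C /\ K z) (z \in inside K C).
Proof. by rewrite mem_filter; apply: (iffP andP) => -[] => [/asboolP|? /asboolP]. Qed.

Lemma size_inside (K : set pt) (C : seq pt) :
  size C = (size (inside K C) + size (inside (~` K) C))%N.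
Proof.
rewrite !size_filter -(count_predC (fun z => `[< K z >])).
by congr addn; apply: eq_count => z /=; rewrite asbool_neg.
Qed.

Lemma size_inside_le (K : set pt) (C : seq pt) : (size (inside K C) <= size C)%N.
Proof. by rewrite size_filter count_size. Qed.

Lemma inside_inside (K K' : set pt) (C : seq pt) :
  K' `<=` K -> inside K' (inside K C) = inside K' C.
Proof.
move=> K'K; rewrite /inside -filter_predI; apply: eq_filter => z /=.
by case: (asboolP (K' z)) => // /K'K /asboolP ->.
Qed.

Lemma cut_side (S A1 A2 : set pt) (C : seq pt) : cut S C A1 A2 ->
  exists E, [/\ closed_outside S C E, A1 `|` setC_of C `<=` E, E `<=` S & E `&` A2 = set0].
Proof.
case=> _ [CS [A1S _]] [CA _] sep.
pose E := setC_of C `|` [set y | exists2 x, A1 x & reach (S `\` setC_of C) x y].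
exists E; split.
- move=> y w [/= yC|[x A1x xy]] yC' Sw yw; first by rewrite yC in yC'.
  have [wC|/negP wC] := boolP (w \in C); [by left | right; exists x => //].
  exact: reach_trans xy (reach1 (reach_memr xy) (conj Sw wC) yw).
- move=> z [A1z|zC]; [right; exists z => // | by left].
  by apply: reach_refl; split; [exact: A1S | case/CA].
- by move=> y [/CS|[x _ /reach_memr[]]].
- rewrite -subset0 => y [[/CA[]//|[x A1x [s [[ps sSC] <-]]]] A2l].
  have [|z zs zC] := sep x s A1x _ A2l; first by split => // z /sSC[].
  by case: (sSC z zs).
Qed.

Lemma cut_of_closed (S K1 K2 : set pt) (C : seq pt) :
  uniq C -> setC_of C `<=` K1 -> K1 `<=` S -> K2 `<=` S ->
  K1 `&` K2 `<=` setC_of C -> closed_outside S C K2 ->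
  cut S C (K1 `\` setC_of C) (K2 `\` setC_of C).
Proof.
move=> uC CK1 K1S K2S K12 clK2; split => //.
- by split; [move=> z /CK1/K1S | split=> z [Kz _]; [apply: K1S | apply: K2S]].
- split; first by move=> z zC; split => -[_]; apply.
  by rewrite -subset0 => z [[K1z zC] [K2z _]]; apply: zC; apply: K12.
- move=> x s [K1x xC] ps [K2l _]; apply: path_enters clK2 ps _ K2l => K2x.
  by apply: xC; apply: K12.
Qed.

Section HeavyPieces.
Variables (R : realType) (S : set pt) (alpha : R).

Definition heavy (n : nat) (K : set pt) : Prop := ((alpha * n%:R)%:E < Span R K)%E.

Lemma heavy_subset n (X Y : set pt) : X `<=` Y -> heavy n X -> heavy n Y.
Proof. by move=> XY /lt_le_trans; apply; apply: le_span_d. Qed.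

Lemma heavy0 (X : set pt) p : X p -> heavy 0 X.
Proof. by move=> Xp; rewrite /heavy mulr0; apply: span_d_gt0 Xp. Qed.

(* For alpha < 0 the bound only needs X to be nonempty when C is. *)
Lemma heavy_leq (C : seq pt) (X : set pt) m :
  setC_of C `<=` X -> (m <= size C)%N -> heavy (size C) X -> heavy m X.
Proof.
move=> CX le_m hX; have [alpha_ge0|alpha_lt0] := leP 0 alpha.
  by apply: le_lt_trans hX; rewrite lee_fin ler_wpM2l // ler_nat.
case: m le_m => [|m] le_m.
  by case: C CX le_m hX => [//|c C] CX _ _; apply: (heavy0 (CX c (mem_head _ _))).
apply: lt_le_trans (span_d_ge0 _ _).
by rewrite lte_fin pmulr_llt0 ?ltr0n.
Qed.

Lemma heavy_connected_piece (C : seq pt) (E : set pt) :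
  setC_of C `<=` E -> closed_outside S C E -> heavy (size C) E ->
  exists K, [/\ K `<=` E, connected_set K, closed_outside S (inside K C) K &
    heavy (size (inside K C)) K].
Proof.
have [n] := ubnP (size C); elim: n C E => // n IH C E ltCn CE clE hE.
have [x Ex] : E !=set0.
  case: C CE clE hE {ltCn} => [_ _ hE|c C CE _ _].
    apply/set0P; apply: contraPneq hE => ->.
    by rewrite /heavy /Span span_d_set0 mulr0 ltxx.
  by exists c; apply: CE; exact: mem_head.
pose K := reach E x.
have KE : K `<=` E by move=> y /reach_memr.
have notinC y (K' : set pt) : K' y -> y \notin inside K' C -> y \notin C.
  by move=> K'y; apply: contra => yC; apply/mem_insideP.
have [hK|hKle] := ltP (alpha * (size (inside K C))%:R)%:E (Span R K).
  exists K; split => //; first exact: connected_reach.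
  move=> y w Ky /(notinC _ _ Ky) yC Sw yw.
  by apply: reach_trans Ky (reach1 (KE y Ky) (clE y w (KE y Ky) yC Sw yw) yw).
(* Otherwise subadditivity makes E \ K heavy for the cut points outside K,
   and there are fewer of them: K is nonempty, hence heavy for 0. *)
pose C' := inside (~` K) C; pose E' := E `\` K.
have CK_gt0 : (0 < size (inside K C))%N.
  rewrite lt0n; apply: contraPneq hKle => /size0nil->.
  by apply/negP; rewrite -ltNge; exact: heavy0 (reach_refl Ex).
have ltC'n : (size C' < n)%N.
  by move: ltCn; rewrite [size C](size_inside K) /C'; lia.
have C'E' : setC_of C' `<=` E' by move=> z /mem_insideP[/CE].
have clE' : closed_outside S C' E'.
  move=> y w [Ey Ky] /(notinC _ _ Ky) yC Sw yw; have Ew := clE y w Ey yC Sw yw.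
  by split => // Kw; apply: Ky; apply: reach_trans Kw (reach1 Ew Ey _); rewrite adj_sym.
have hE' : heavy (size C') E'.
  have splitE : (Span R E <= Span R K + Span R E')%E.
    by apply: le_trans (span_dU _ _ _); rewrite setDUK.
  have := lt_le_trans hE (le_trans splitE (leeD2r _ hKle)).
  by rewrite [size C](size_inside K) natrD mulrDr EFinD lteD2lE.
have [K' [K'E' cK' clK' hK']] := IH C' E' ltC'n C'E' clE' hE'.
have K'K : K' `<=` ~` K by move=> z /K'E'[].
exists K'; rewrite -(inside_inside C K'K); split => //.
by apply: subset_trans K'E' _; apply: subDsetl.
Qed.

Lemma connected_cut_of_heavy_cut (C : seq pt) (A1 A2 : set pt) :
  cut S C A1 A2 -> heavy (size C) (A1 `|` setC_of C) ->
  heavy (size C) (A2 `|` setC_of C) ->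
  exists C' A1' A2', [/\ (size C' <= size C)%N, cut S C' A1' A2',
    connected_cut C' A1' A2', heavy (size C') (A1' `|` setC_of C') &
    heavy (size C') (A2' `|` setC_of C')].
Proof.
move=> cutC h1 h2; have [E1 [clE1 AE1 E1S E1A2]] := cut_side cutC.
have [uC [CS [_ A2S]] _ _] := cutC.
have CE1 : setC_of C `<=` E1 by move=> z zC; apply: AE1; right.
have [K1 [K1E1 cK1 clK1 hK1]] :=
  heavy_connected_piece CE1 clE1 (heavy_subset AE1 h1).
pose C1 := inside K1 C; pose E2 := (S `\` K1) `|` setC_of C1.
have AE2 : A2 `|` setC_of C `<=` E2.
  move=> y [A2y|yC]; last first.
    have [K1y|K1y] := pselect (K1 y); first by right; apply/mem_insideP.
    by left; split => //; apply: CS.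
  left; split => [|/K1E1 E1y]; first exact: A2S.
  by have : (E1 `&` A2) y by [split]; rewrite E1A2.
have hE2 : heavy (size C1) E2.
  apply: heavy_leq (size_inside_le _ _) (heavy_subset AE2 h2).
  by move=> z zC; apply: AE2; right.
have [K2 [K2E2 cK2 clK2 hK2]] :=
  heavy_connected_piece (fun z zC1 => or_intror zC1) (closed_outside_compl clK1) hE2.
pose C2 := inside K2 C1.
have C1K1 : setC_of C1 `<=` K1 by move=> z /mem_insideP[].
have C2K1 : setC_of C2 `<=` K1 by move=> z /mem_insideP[/C1K1].
have C2K2 : setC_of C2 `<=` K2 by move=> z /mem_insideP[].
have K12 : K1 `&` K2 `<=` setC_of C2.
  move=> z [K1z K2z]; apply/mem_insideP; split => //.
  by case: (K2E2 z K2z) => [[_ /(_ K1z)]|].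
exists C2, (K1 `\` setC_of C2), (K2 `\` setC_of C2).
rewrite /connected_cut (setDKU C2K1) (setDKU C2K2); split => //.
- exact: leq_trans (size_inside_le _ _) (size_inside_le _ _).
- apply: cut_of_closed; rewrite ?filter_uniq //.
  + by move=> z /K1E1/E1S.
  + by move=> z /K2E2[[]|/mem_insideP[/CS]].
- exact: heavy_leq C1K1 (size_inside_le _ _) hK1.
Qed.

End HeavyPieces.

Theorem theorem3p3 (R : realType) (S : set pt) (alpha : R) :
  Theta S alpha = vartheta S alpha 0%R.
Proof.
apply/le_anti/andP; split.
  apply: ereal_inf_le_tmp => _ [C [A1 [A2 [-> cutC _]]]]; rewrite addr0 => h.
  by exists C, A1, A2.
apply/ereal_infP => _ [C [A1 [A2 [-> cutC]]]]; rewrite /cut_m lt_min => /andP[h1 h2].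
have [C' [A1' [A2' [leC' cutC' conn h1' h2']]]] := connected_cut_of_heavy_cut cutC h1 h2.
apply: (@le_trans _ _ (size C')%:R%:E); last by rewrite lee_fin ler_nat.
apply: ereal_inf_lbound; exists C', A1', A2'; split => //.
by rewrite addr0 /cut_m lt_min; apply/andP.
Qed.
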